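(* Let $A$ be a linearly ordered set and let $G$ be a passable game over $A$ that is in canonical form. Then $G$ is monotone.
   Context: Games over a poset $A$ are defined inductively: for each $a\in A$ there is an atomic game $[a]$, which has no options; and if $L$ and $R$ are non-empty sets of games, then $\{L\mid R\}$ is a composite game with left options $L$ and right options $R$. The relations $\le$ and $\lhd$ are defined by simultaneous recursion: $G\le H$ iff (1) every left option $G^L$ of $G$ satisfies $G^L\lhd H$, (2) every right option $H^R$ of $H$ satisfies $G\lhd H^R$, and (3) if $G$ or $H$ is atomic then $G\lhd H$; and $G\lhd H$ iff (1) some right option $G^R$ of $G$ satisfies $G^R\le H$, or (2) some left option $H^L$ of $H$ satisfies $G\le H^L$, or (3) $G=[a]$, $H=[b]$ are atomic and $a\le b$. $G\equiv H$ means $G\le H$ and $H\le G$. A game $G$ is passable if $G\lhd G$ and recursively all its options are passable. A left option $G^L$ is good if $G\le G^L$, a right option $G^R$ is good if $G^R\le G$; a game is monotone if all its options are good and recursively all its options are monotone. Canonical form: among distinct left options $H,K$ of $G$, $K$ is dominated if $K\le H$; among distinct right options $H,K$, $K$ is dominated if $H\le K$. A left option $H$ of $G$ is reversible if $H$ has a right option $K$ with $K\le G$; a right option $H$ of $G$ is reversible if $H$ has a left option $K$ with $G\le K$. An option $H$ of $G$ is a passing option if $H\equiv G$. $G$ is in canonical form if it has no dominated, reversible or passing options and all its options are in canonical form. *)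

From mathcomp Require Import all_boot all_order.
Set Implicit Arguments. Unset Strict Implicit. Unset Printing Implicit Defensive.
Import Order.TTheory.
Local Open Scope order_scope.

(* A composite game {L | R} is given by two
   non-empty families of options indexed by arbitrary (possibly infinite)
   types I and J; the sets of options are the images of these families. *)
Inductive game (A : Type) : Type :=
| Atom : A -> game A
| Comp : forall (I J : Type), inhabited I -> inhabited J ->
         (I -> game A) -> (J -> game A) -> game A.

Arguments Atom {A} a.
Arguments Comp {A} I J _ _ _ _.

Section Games.
Context {d : Order.disp_t} {A : porderType d}.

(* rel G H = (G <= H, G <| H), by simultaneous recursion. *)
Fixpoint rel (G : game A) : game A -> Prop * Prop :=
  fix relH (H : game A) : Prop * Prop :=
  match G, H with
  | Atom a, Atom b => let lf := (a <= b) in (lf : Prop, lf : Prop)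
  | Atom a, Comp _ _ _ _ HL HR =>
      let lf := exists i, (relH (HL i)).1 in
      ((forall j, (relH (HR j)).2) /\ lf, lf)
  | Comp _ _ _ _ GL GR, Atom b =>
      let lf := exists j, (rel (GR j) H).1 in
      ((forall i, (rel (GL i) H).2) /\ lf, lf)
  | Comp _ _ _ _ GL GR, Comp _ _ _ _ HL HR =>
      ((forall i, (rel (GL i) H).2) /\ (forall j, (relH (HR j)).2),
       (exists j, (rel (GR j) H).1) \/ (exists i, (relH (HL i)).1))
  end.

Definition gle (G H : game A) : Prop := (rel G H).1.
Definition glf (G H : game A) : Prop := (rel G H).2.
Definition gequiv (G H : game A) : Prop := gle G H /\ gle H G.

(* Identity of games as (set-theoretic) objects: equal atoms, or equal sets
   of left options and equal sets of right options. *)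
Fixpoint gid (G H : game A) : Prop :=
  match G, H with
  | Atom a, Atom b => a = b
  | Comp _ _ _ _ GL GR, Comp _ _ _ _ HL HR =>
      (forall i, exists i', gid (GL i) (HL i')) /\
      (forall i', exists i, gid (GL i) (HL i')) /\
      (forall j, exists j', gid (GR j) (HR j')) /\
      (forall j', exists j, gid (GR j) (HR j'))
  | _, _ => False
  end.

Definition LeftOpt (G K : game A) : Prop :=
  match G with Atom _ => False | Comp _ _ _ _ L _ => exists i, L i = K end.
Definition RightOpt (G K : game A) : Prop :=
  match G with Atom _ => False | Comp _ _ _ _ _ R => exists j, R j = K end.

Fixpoint passable (G : game A) : Prop :=
  glf G G /\
  match G with
  | Atom _ => True
  | Comp _ _ _ _ L R => (forall i, passable (L i)) /\ (forall j, passable (R j))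
  end.

Fixpoint monotone (G : game A) : Prop :=
  match G with
  | Atom _ => True
  | Comp _ _ _ _ L R =>
      (forall i, gle G (L i)) /\ (forall j, gle (R j) G) /\
      (forall i, monotone (L i)) /\ (forall j, monotone (R j))
  end.

Fixpoint canonical (G : game A) : Prop :=
  match G with
  | Atom _ => True
  | Comp _ _ _ _ L R =>
      (* no dominated left options *)
      (forall i i', ~ gid (L i) (L i') -> ~ gle (L i') (L i)) /\
      (* no dominated right options *)
      (forall j j', ~ gid (R j) (R j') -> ~ gle (R j) (R j')) /\
      (* no reversible left options *)
      (forall i K, RightOpt (L i) K -> ~ gle K G) /\
      (* no reversible right options *)
      (forall j K, LeftOpt (R j) K -> ~ gle G K) /\
      (* no passing options *)
      (forall i, ~ gequiv (L i) G) /\ (forall j, ~ gequiv (R j) G) /\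
      (forall i, canonical (L i)) /\ (forall j, canonical (R j))
  end.

End Games.

From mathcomp Require Import all_boot all_order.
From Stdlib Require Import Classical.
Import Order.TTheory.
Local Open Scope order_scope.

(* Over a linearly ordered set any two passable games X, Y satisfy Y <= X or
   X <| Y.  In a passable canonical game G this comparability turns the
   absence of dominated options into G^L' <| G^L for all left options, and the
   absence of reversible options into G <| K for every right option K of a
   left option G^L; together these give G <= G^L when G^L is composite.  When
   G^L = [a] is atomic, every left option of G is <| [a], and since G is
   passable this already forces G <= [a]. *)

Section GamesOverPoset.
Context {d : Order.disp_t} {A : porderType d}.
Implicit Types (G H K : game A) (a b : A).

Definition is_atom G := exists a, G = Atom a.

Lemma game_opt_ind (P : game A -> Prop) :
  (forall G, (forall K, LeftOpt G K -> P K) -> (forall K, RightOpt G K -> P K) ->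
     P G) ->
  forall G, P G.
Proof.
move=> IH; elim=> [a|I J iI iJ L IHL R IHR]; first by apply: IH => K [].
by apply: IH => K /= [x <-]; [apply: IHL | apply: IHR].
Qed.

Lemma LeftOpt_composite {G K} : LeftOpt G K -> ~ is_atom G.
Proof. by case: G => // ? ? ? ? ? ? [? ?] [? ?]. Qed.

Lemma RightOpt_composite {G K} : RightOpt G K -> ~ is_atom G.
Proof. by case: G => // ? ? ? ? ? ? [? ?] [? ?]. Qed.

Lemma glf_iff G H : glf G H <->
  (exists K, RightOpt G K /\ gle K H) \/ (exists K, LeftOpt H K /\ gle G K) \/
  (exists a b, G = Atom a /\ H = Atom b /\ a <= b).
Proof.
case: G => [a|I J iI iJ GL GR]; case: H => [b|I' J' iI' iJ' HL HR];
  rewrite /glf /gle /=; firstorder (subst; eauto; congruence).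
Qed.

Lemma gle_iff G H : gle G H <->
  (forall K, LeftOpt G K -> glf K H) /\ (forall K, RightOpt H K -> glf G K) /\
  (is_atom G \/ is_atom H -> glf G H).
Proof.
case: G => [a|I J iI iJ GL GR]; case: H => [b|I' J' iI' iJ' HL HR];
  rewrite /glf /gle /is_atom /=; firstorder (subst; eauto; try discriminate).
Qed.

Lemma gle_atom a b : gle (Atom a) (Atom b) = (a <= b). Proof. by []. Qed.
Lemma glf_atom a b : glf (Atom a) (Atom b) = (a <= b). Proof. by []. Qed.

Lemma gle_refl G : gle G G.
Proof.
elim/game_opt_ind: G => G IHL IHR; apply/gle_iff; split; [|split].
- by move=> K lK; apply/glf_iff; right; left; exists K; auto.
- by move=> K rK; apply/glf_iff; left; exists K; auto.
- by move=> [[a ->]|[a ->]]; rewrite glf_atom.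
Qed.

Lemma passable_lf {G} : passable G -> glf G G.
Proof. by case: G => [a|I J iI iJ L R] []. Qed.

Lemma passable_left {G K} : passable G -> LeftOpt G K -> passable K.
Proof. by case: G => [a _ []|I J iI iJ L R [_ [pL _]] [i <-]]; apply: pL. Qed.

Lemma passable_right {G K} : passable G -> RightOpt G K -> passable K.
Proof. by case: G => [a _ []|I J iI iJ L R [_ [_ pR]] [j <-]]; apply: pR. Qed.

(* The three transitivity laws have to be proved by one simultaneous
   induction on the triple (G, H, K). *)
Definition trans_at G H K : Prop :=
  (gle G H -> gle H K -> gle G K) /\ (gle G H -> glf H K -> glf G K) /\
  (glf G H -> gle H K -> glf G K).

Lemma gle_glf_trans_step G H K :
  (forall G', RightOpt G G' -> trans_at G' H K) ->
  (forall H', RightOpt H H' -> trans_at G H' K) ->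
  (forall K', LeftOpt K K' -> trans_at G H K') ->
  gle G H -> glf H K -> glf G K.
Proof.
move=> IHG IHH IHK leGH /glf_iff [[H' [rH leH'K]]|[[K' [lK leHK']]|]].
- have [_ [_ t]] := IHH H' rH; apply: t leH'K.
  by case/gle_iff: leGH => _ [+ _]; apply.
- have [t _] := IHK K' lK; apply/glf_iff; right; left; exists K'; auto.
move=> [a [b [eH [eK ab]]]]; subst H K.
have /glf_iff : glf G (Atom a) by case/gle_iff: leGH => _ [_]; apply; right; exists a.
move=> [[G' [rG leG'a]]|[[? [[] _]]|[c [_ [eG [[<-] ca]]]]]].
- have [t _] := IHG G' rG; apply/glf_iff; left; exists G'; split=> //.
  by apply: t leG'a _; rewrite gle_atom.
- by rewrite eG glf_atom (le_trans ca ab).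
Qed.

Lemma glf_gle_trans_step G H K :
  (forall G', RightOpt G G' -> trans_at G' H K) ->
  (forall H', LeftOpt H H' -> trans_at G H' K) ->
  (forall K', LeftOpt K K' -> trans_at G H K') ->
  glf G H -> gle H K -> glf G K.
Proof.
move=> IHG IHH IHK /glf_iff [[G' [rG leG'H]]|[[H' [lH leGH']]|[a [b [eG [eH ab]]]]]] leHK.
- have [t _] := IHG G' rG; apply/glf_iff; left; exists G'; auto.
- have [_ [t _]] := IHH H' lH; apply: t leGH' _.
  by case/gle_iff: leHK => + _; apply.
subst G H.
have /glf_iff : glf (Atom b) K by case/gle_iff: leHK => _ [_]; apply; left; exists b.
move=> [[? [[] _]]|[[K' [lK lebK']]|[_ [c [[<-] [eK bc]]]]]].
- have [t _] := IHK K' lK; apply/glf_iff; right; left; exists K'; split=> //.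
  by apply: t _ lebK'; rewrite gle_atom.
- by rewrite eK glf_atom (le_trans ab bc).
Qed.

Lemma gle_trans_step G H K :
  (forall G', LeftOpt G G' -> trans_at G' H K) ->
  (forall K', RightOpt K K' -> trans_at G H K') ->
  (gle G H -> glf H K -> glf G K) -> (glf G H -> gle H K -> glf G K) ->
  gle G H -> gle H K -> gle G K.
Proof.
move=> IHG IHK le_lf lf_le leGH leHK; apply/gle_iff; split; [|split].
- move=> G' lG; have [_ [_ t]] := IHG G' lG; apply: t leHK.
  by case/gle_iff: leGH => + _; apply.
- move=> K' rK; have [_ [t _]] := IHK K' rK; apply: t leGH _.
  by case/gle_iff: leHK => _ [+ _]; apply.
- move=> [atG|atK].
  + by apply: lf_le leHK; case/gle_iff: leGH => _ [_]; apply; left.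
  + by apply: le_lf leGH _; case/gle_iff: leHK => _ [_]; apply; right.
Qed.

Lemma trans_at_all G H K : trans_at G H K.
Proof.
move: H K; elim/game_opt_ind: G => G IHGL IHGR H.
elim/game_opt_ind: H => H IHHL IHHR K.
elim/game_opt_ind: K => K IHKL IHKR.
have le_lf : gle G H -> glf H K -> glf G K.
  by apply: gle_glf_trans_step => [G' /IHGR|H' /IHHR|K' /IHKL].
have lf_le : glf G H -> gle H K -> glf G K.
  by apply: glf_gle_trans_step => [G' /IHGR|H' /IHHL|K' /IHKL].
split; last by split.
by apply: (@gle_trans_step G H K _ _ le_lf lf_le) => [G' /IHGL|K' /IHKR].
Qed.

Lemma gle_trans {G H K} : gle G H -> gle H K -> gle G K.
Proof. by case: (trans_at_all G H K). Qed.

Lemma gle_glf_trans {G H K} : gle G H -> glf H K -> glf G K.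
Proof. by case: (trans_at_all G H K) => _ []. Qed.

Lemma glf_gle_trans {G H K} : glf G H -> gle H K -> glf G K.
Proof. by case: (trans_at_all G H K) => _ []. Qed.

Lemma gid_sym G H : gid G H -> gid H G.
Proof.
elim: G H => [a|I J iI iJ GL IHL GR IHR] [b|I' J' iI' iJ' HL HR] //=.
move=> [idL [idL' [idR idR']]]; split; [|split; [|split]].
- by move=> i'; have [i /IHL] := idL' i'; exists i.
- by move=> i; have [i' /IHL] := idL i; exists i'.
- by move=> j'; have [j /IHR] := idR' j'; exists j.
- by move=> j; have [j' /IHR] := idR j; exists j'.
Qed.

Lemma gid_gequiv G H : gid G H -> gequiv G H.
Proof.
elim: G H => [a|I J iI iJ GL IHL GR IHR] [b|I' J' iI' iJ' HL HR] //=.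
  by move=> ->; split; apply: gle_refl.
move=> [idL [idL' [idR idR']]]; split; apply/gle_iff; (split; [|split]);
  try by move=> [[? ?]|[? ?]].
- move=> _ [i <-]; have [i' /IHL [le _]] := idL i.
  by apply/glf_iff; right; left; exists (HL i'); split; first exists i'.
- move=> _ [j' <-]; have [j /IHR [le _]] := idR' j'.
  by apply/glf_iff; left; exists (GR j); split; first exists j.
- move=> _ [i' <-]; have [i /IHL [_ le]] := idL' i'.
  by apply/glf_iff; right; left; exists (GL i); split; first exists i.
- move=> _ [j <-]; have [j' /IHR [_ le]] := idR j.
  by apply/glf_iff; left; exists (HR j'); split; first exists j'.
Qed.

Section BelowAtom.
Variables (G : game A) (a : A).
Hypotheses (G_composite : ~ is_atom G)
  (left_lf_a : forall K, LeftOpt G K -> glf K (Atom a)).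

Lemma below_atom_of_left_lf H :
  passable H -> (gle H G -> gle H (Atom a)) /\ (glf H G -> glf H (Atom a)).
Proof.
elim/game_opt_ind: H => H IHL IHR pH.
have lf_lf : glf H G -> glf H (Atom a).
  move=> /glf_iff [[K [rH leKG]]|[[K [lG leHK]]|[_ [b [_ [eG _]]]]]].
  - have [le _] := IHR K rH (passable_right pH rH).
    by apply/glf_iff; left; exists K; auto.
  - exact: gle_glf_trans leHK (left_lf_a _ lG).
  - by case: G_composite; exists b.
split=> // leHG; apply/gle_iff; split; [|split] => // [K lH|_].
  have [_ lf] := IHL K lH (passable_left pH lH).
  by apply: lf; case/gle_iff: leHG => + _; apply.
(* The required H <| [a] comes from H <| H: this is where passability enters. *)
have /glf_iff := passable_lf pH.
move=> [[K [rH leKH]]|[[K [lH leHK]]|[b [_ [eH _]]]]].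
- have [le _] := IHR K rH (passable_right pH rH).
  by apply/glf_iff; left; exists K; split; last apply/le/(gle_trans leKH).
- have [_ lf] := IHL K lH (passable_left pH lH).
  by apply: gle_glf_trans leHK (lf _); case/gle_iff: leHG => + _; apply.
- by apply: lf_lf; case/gle_iff: leHG => _ [_]; apply; left; exists b.
Qed.

Lemma gle_atom_of_left_lf : passable G -> gle G (Atom a).
Proof. by move=> pG; apply: (below_atom_of_left_lf G pG).1; apply: gle_refl. Qed.

End BelowAtom.

Section AboveAtom.
Variables (G : game A) (a : A).
Hypotheses (G_composite : ~ is_atom G)
  (right_lf_a : forall K, RightOpt G K -> glf (Atom a) K).

Lemma above_atom_of_right_lf H :
  passable H -> (gle G H -> gle (Atom a) H) /\ (glf G H -> glf (Atom a) H).
Proof.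
elim/game_opt_ind: H => H IHL IHR pH.
have lf_lf : glf G H -> glf (Atom a) H.
  move=> /glf_iff [[K [rG leKH]]|[[K [lH leGK]]|[b [_ [eG _]]]]].
  - exact: glf_gle_trans (right_lf_a _ rG) leKH.
  - have [le _] := IHL K lH (passable_left pH lH).
    by apply/glf_iff; right; left; exists K; auto.
  - by case: G_composite; exists b.
split=> // leGH; apply/gle_iff; split; [|split] => // [K rH|_].
  have [_ lf] := IHR K rH (passable_right pH rH).
  by apply: lf; case/gle_iff: leGH => _ [+ _]; apply.
have /glf_iff := passable_lf pH.
move=> [[K [rH leKH]]|[[K [lH leHK]]|[b [_ [eH _]]]]].
- have [_ lf] := IHR K rH (passable_right pH rH).
  by apply: glf_gle_trans (lf _) leKH; case/gle_iff: leGH => _ [+ _]; apply.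
- have [le _] := IHL K lH (passable_left pH lH).
  by apply/glf_iff; right; left; exists K; split; last apply/le/(gle_trans leGH).
- by apply: lf_lf; case/gle_iff: leGH => _ [_]; apply; right; exists b.
Qed.

Lemma gle_atom_of_right_lf : passable G -> gle (Atom a) G.
Proof. by move=> pG; apply: (above_atom_of_right_lf G pG).1; apply: gle_refl. Qed.

End AboveAtom.

End GamesOverPoset.

Section GamesOverChain.
Context {d : Order.disp_t} {A : orderType d}.
Implicit Types G K X Y : game A.

Lemma gle_or_glf_step X Y : passable X -> passable Y ->
  (forall K, LeftOpt Y K -> gle X K \/ glf K X) ->
  (forall K, RightOpt X K -> gle K Y \/ glf Y K) ->
  (forall K, RightOpt Y K -> gle K X \/ glf X K) ->
  (forall K, LeftOpt X K -> gle Y K \/ glf K Y) ->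
  gle Y X \/ glf X Y.
Proof.
move=> pX pY hYL hXR hYR hXL.
case: (classic (glf X Y)) => [|nlfXY]; [by right | left].
have lf_YL : forall K, LeftOpt Y K -> glf K X.
  move=> K lY; case: (hYL K lY) => // le; case: nlfXY.
  by apply/glf_iff; right; left; exists K.
have lf_XR : forall K, RightOpt X K -> glf Y K.
  move=> K rX; case: (hXR K rX) => // le; case: nlfXY.
  by apply/glf_iff; left; exists K.
apply/gle_iff; split; [|split] => // atom_XY.
have [[a eX]|YX] := classic (is_atom X); have [[b eY]|XY] := classic (is_atom Y).
- subst X Y; rewrite glf_atom in nlfXY *.
  by case/orP: (le_total a b) => // ab; case: nlfXY.
- have /glf_iff := passable_lf pY.
  move=> [[K [rY leKY]]|[[K [lY leYK]]|[c [_ [eY _]]]]].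
  + case: (hYR K rY) => [le|lf]; first by apply/glf_iff; left; exists K.
    by case: nlfXY; apply: glf_gle_trans lf leKY.
  + exact: gle_glf_trans leYK (lf_YL K lY).
  + by case: XY; exists c.
- have /glf_iff := passable_lf pX.
  move=> [[K [rX leKX]]|[[K [lX leXK]]|[c [_ [eX _]]]]].
  + exact: glf_gle_trans (lf_XR K rX) leKX.
  + case: (hXL K lX) => [le|lf]; first by apply/glf_iff; right; left; exists K.
    by case: nlfXY; apply: gle_glf_trans leXK lf.
  + by case: YX; exists c.
- by case: atom_XY.
Qed.

Lemma gle_or_glf {X Y} : passable X -> passable Y -> gle Y X \/ glf X Y.
Proof.
suff sym : (passable X -> passable Y -> gle Y X \/ glf X Y) /\
           (passable Y -> passable X -> gle X Y \/ glf Y X) by apply: sym.1.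
move: Y; elim/(@game_opt_ind _ A): X => X IHXL IHXR Y.
elim/(@game_opt_ind _ A): Y => Y IHYL IHYR.
split=> pX pY; apply: gle_or_glf_step => // K oK.
- exact: (IHYL K oK).2 (passable_left pY oK) pX.
- exact: (IHXR K oK Y).2 pY (passable_right pX oK).
- exact: (IHYR K oK).1 pX (passable_right pY oK).
- exact: (IHXL K oK Y).1 (passable_left pX oK) pY.
- exact: (IHXL K oK Y).1 (passable_left pY oK) pX.
- exact: (IHYR K oK).1 pY (passable_right pX oK).
- exact: (IHXR K oK Y).2 pX (passable_right pY oK).
- exact: (IHYL K oK).2 (passable_left pX oK) pY.
Qed.

Lemma glf_of_undominated (I : Type) (F : I -> game A) :
  (forall i, passable (F i)) ->
  (forall i i', ~ gid (F i) (F i') -> ~ gle (F i') (F i)) ->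
  forall i i', glf (F i) (F i').
Proof.
move=> pF undom i i'; case: (gle_or_glf (pF i) (pF i')) => // le.
case: (classic (gid (F i) (F i'))) => [/gid_gequiv [le' _]|nid].
  exact: glf_gle_trans (passable_lf (pF i)) le'.
by case: (undom i i' nid).
Qed.

Lemma gle_left_option {G K} : passable G -> LeftOpt G K ->
  (forall K', LeftOpt G K' -> glf K' K) -> (forall K', RightOpt K K' -> ~ gle K' G) ->
  gle G K.
Proof.
move=> pG lG lf_K irrev; have pK := passable_left pG lG.
case: K => [a|I J iI iJ KL KR] in lG lf_K irrev pK *.
  exact: (gle_atom_of_left_lf _ _ (LeftOpt_composite lG) lf_K pG).
apply/gle_iff; split; [|split] => //.
- move=> K' rK; case: (gle_or_glf pG (passable_right pK rK)) => // le.
  by case: (irrev K' rK).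
- by move=> [/(LeftOpt_composite lG)|[? ?]].
Qed.

Lemma gle_right_option {G K} : passable G -> RightOpt G K ->
  (forall K', RightOpt G K' -> glf K K') -> (forall K', LeftOpt K K' -> ~ gle G K') ->
  gle K G.
Proof.
move=> pG rG lf_K irrev; have pK := passable_right pG rG.
case: K => [a|I J iI iJ KL KR] in rG lf_K irrev pK *.
  exact: (gle_atom_of_right_lf _ _ (RightOpt_composite rG) lf_K pG).
apply/gle_iff; split; [|split] => //.
- move=> K' lK; case: (gle_or_glf (passable_left pK lK) pG) => // le.
  by case: (irrev K' lK).
- by move=> [[? ?]|/(RightOpt_composite rG)].
Qed.

End GamesOverChain.

Theorem theorem7p4 (d : Order.disp_t) (A : orderType d) (G : game A) :
  passable G -> canonical G -> monotone G.
Proof.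
elim: G => [//|I J iI iJ L IHL R IHR] pG cG.
have [_ [pL pR]] : _ /\ (forall i, passable (L i)) /\ (forall j, passable (R j)) := pG.
have [domL [domR [revL [revR [_ [_ [canL canR]]]]]]] := cG.
split; [|split; [|split]] => [i|j|i|j].
- apply: (gle_left_option pG _ _ (revL i)); first by exists i.
  by move=> _ [i' <-]; apply: glf_of_undominated.
- apply: (gle_right_option pG _ _ (revR j)); first by exists j.
  by move=> _ [j' <-]; apply: glf_of_undominated => // k k' nid; apply/domR => /gid_sym.
- exact: IHL (pL i) (canL i).
- exact: IHR (pR j) (canR j).
Qed.
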